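(* Let $\mathcal{X}$ be a Banach space, $\epsilon>0$, $P\in\mathcal{B}(\mathcal{X})$ a projection with $\|P\|_\infty=1$, and $[0,\epsilon]\ni t\mapsto P(t)\in\mathcal{B}(\mathcal{X})$, $[0,\epsilon]\ni t\mapsto C(t)\in\mathcal{B}(\mathcal{X})$ two maps such that, for some $v,w\ge0$ and all $t\in[0,\epsilon]$, $P(t)^2=P(t)$, $P(t)C(t)=C(t)P(t)=C(t)$, $\|P(t)-P\|_\infty\le tv$ and $\|C(t)-P(t)\|_\infty\le tw$. Then for all $n\in\mathbb{N}$ with $\frac1n\in[0,\epsilon]$, $$\Big\|C(\tfrac1n)^n-e^{n(C(\frac1n)-P(\frac1n))}P(\tfrac1n)\Big\|_\infty\le\frac n2e^{v+w}\Big\|\big(C(\tfrac1n)-P(\tfrac1n)\big)^2\Big\|_\infty\le\frac{w^2}{2n}e^{v+w}.$$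
   Context: $\mathcal{B}(\mathcal{X})$: bounded operators with operator norm $\|\cdot\|_\infty$; a projection is a bounded idempotent; exponentials of bounded operators are defined by power series. *)

From HB Require Import structures.
From mathcomp Require Import all_boot all_order all_algebra.
From mathcomp Require Import all_classical all_reals all_analysis.
Set Implicit Arguments. Unset Strict Implicit. Unset Printing Implicit Defensive.
Import Order.TTheory GRing.Theory Num.Theory.
Import numFieldNormedType.Exports.
Local Open Scope classical_set_scope.
Local Open Scope ring_scope.

(* Operators on a (real) normed space X are represented as functions X -> X.
   B(X) = bounded linear operators. *)
Definition bounded_op (R : realType) (X : normedModType R) (A : X -> X) : Prop :=
  (forall x y : X, A (x + y) = A x + A y) /\
  (forall (a : R) (x : X), A (a *: x) = a *: A x) /\
  (exists M : R, forall x : X, `|A x| <= M * `|x|).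

Definition opnorm (R : realType) (X : normedModType R) (A : X -> X) : R :=
  sup [set r : R | exists x : X, `|x| <= 1 /\ r = `|A x|].

(* operator exponential, defined by the power series sum_k A^k / k!
   (evaluated at x; the operator-norm convergent series has this value) *)
Definition expop (R : realType) (X : completeNormedModType R) (A : X -> X) (x : X) : X :=
  lim ((fun N : nat => \sum_(k < N) ((k`!)%:R^-1 : R) *: iter k A x) @ \oo).

(* Write C = P + D with D = C - P; since P is idempotent and PD = DP = D, the
   binomial theorem gives C^n P = sum_k binom(n,k) D^k P, while
   exp(nD) P = sum_k n^k/k! D^k P.  The terms k = 0, 1 agree, and for k = j + 2
   the coefficients differ by at most n^(j+1)/(2 j!), because
   n^k - n(n-1)...(n-k+1) <= n^(k-1) k(k-1)/2.  With ||D^(j+2) P|| <= ||D^2|| ||D||^j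
   and n ||D|| <= w the difference is at most n/2 e^w ||D^2||, and
   ||D^2|| <= ||D||^2 <= w^2/n^2 gives the second inequality.  The unperturbed
   projection and the constant v only enter through e^w <= e^(v+w). *)

From mathcomp Require Import all_boot all_order all_algebra zify ring lra.
From mathcomp Require Import all_classical all_reals all_analysis.
Set Implicit Arguments. Unset Strict Implicit. Unset Printing Implicit Defensive.
Import Order.TTheory GRing.Theory Num.Theory.
Import numFieldNormedType.Exports.
Local Open Scope classical_set_scope.
Local Open Scope ring_scope.

Section BoundedOperators.
Variables (R : realType) (X : normedModType R).
Implicit Types (A B : X -> X) (x y : X).

Lemma bounded_op0 A : bounded_op A -> A 0 = 0.
Proof. by move=> [addA _]; apply: (addrI (A 0)); rewrite -addA !addr0. Qed.

Lemma bounded_opN A y : bounded_op A -> A (- y) = - A y.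
Proof.
move=> hA; have [addA _] := hA; apply: (addrI (A y)).
by rewrite -addA !subrr bounded_op0.
Qed.

Lemma bounded_opZ A (c : R) y : bounded_op A -> A (c *: y) = c *: A y.
Proof. by move=> [_ []]. Qed.

Lemma bounded_op_sum A N (F : 'I_N -> X) : bounded_op A ->
  A (\sum_(k < N) F k) = \sum_(k < N) A (F k).
Proof.
move=> hA; have [addA _] := hA.
apply: (big_ind2 (fun a b => A a = b)) => [|a b c d <- <-|//]; last exact: addA.
exact: bounded_op0.
Qed.

Lemma norm_le_opnorm A x : bounded_op A -> `|x| <= 1 -> `|A x| <= opnorm A.
Proof.
move=> [_ [_ [M hM]]] x1; apply: ub_le_sup; last by exists x.
exists `|M| => _ [y [y1 ->]]; apply: le_trans (hM y) _.
apply: le_trans (ler_wpM2r (normr_ge0 y) (ler_norm M)) _.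
by rewrite -[leRHS]mulr1 ler_wpM2l.
Qed.

Lemma opnorm_ge0 A : bounded_op A -> 0 <= opnorm A.
Proof.
by move=> hA; apply: le_trans (normr_ge0 (A 0)) (norm_le_opnorm hA _); rewrite normr0.
Qed.

Lemma opnorm_le A K : (forall x, `|x| <= 1 -> `|A x| <= K) -> opnorm A <= K.
Proof.
move=> hK; apply: ge_sup; first by exists `|A 0|, 0; rewrite normr0.
by move=> _ [y [y1 ->]]; exact: hK.
Qed.

Lemma norm_op_le A x : bounded_op A -> `|A x| <= opnorm A * `|x|.
Proof.
move=> hA; have [->|x0] := eqVneq x 0; first by rewrite bounded_op0 // !normr0 mulr0.
have nx : 0 < `|x| by rewrite normr_gt0.
have := norm_le_opnorm (x := `|x|^-1 *: x) hA.
rewrite bounded_opZ // !normrZ normfV normr_id mulVf ?gt_eqF // lexx => /(_ isT).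
by rewrite ler_pdivrMl // mulrC.
Qed.

Lemma bounded_opB A B : bounded_op A -> bounded_op B -> bounded_op (fun x => A x - B x).
Proof.
move=> [addA [sA [MA hA]]] [addB [sB [MB hB]]]; split; [|split].
- by move=> x y; rewrite addA addB opprD addrACA.
- by move=> a x; rewrite sA sB scalerBr.
- exists (MA + MB) => x; rewrite mulrDl; apply: le_trans (ler_normB _ _) _.
  exact: lerD.
Qed.

Lemma bounded_opZl A (c : R) : bounded_op A -> bounded_op (fun x => c *: A x).
Proof.
move=> [addA [sA [M hM]]]; split; [|split].
- by move=> x y; rewrite addA scalerDr.
- by move=> a x; rewrite sA !scalerA mulrC.
- by exists (`|c| * M) => x; rewrite normrZ -mulrA ler_wpM2l.
Qed.

Lemma bounded_op_comp A B : bounded_op A -> bounded_op B -> bounded_op (fun x => A (B x)).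
Proof.
move=> hA hB; have [addA [sA _]] := hA; have [addB [sB _]] := hB; split; [|split].
- by move=> x y; rewrite addB addA.
- by move=> a x; rewrite sB sA.
- exists (opnorm A * opnorm B) => x; apply: le_trans (norm_op_le _ hA) _.
  by rewrite -mulrA ler_wpM2l ?opnorm_ge0 ?norm_op_le.
Qed.

Lemma opnorm_comp_le A B : bounded_op A -> bounded_op B ->
  opnorm (fun x => A (B x)) <= opnorm A * opnorm B.
Proof.
move=> hA hB; apply: opnorm_le => x x1; apply: le_trans (norm_op_le _ hA) _.
apply: ler_wpM2l; first exact: opnorm_ge0.
by apply: le_trans (norm_op_le _ hB) _; rewrite -[leRHS]mulr1 ler_wpM2l ?opnorm_ge0.
Qed.

Lemma norm_iter_le A k x : bounded_op A -> `|iter k A x| <= opnorm A ^+ k * `|x|.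
Proof.
move=> hA; elim: k => [|k IH]; first by rewrite expr0 mul1r.
rewrite iterS exprS -mulrA; apply: le_trans (norm_op_le _ hA) _.
by rewrite ler_wpM2l ?opnorm_ge0.
Qed.

Lemma iter_scale A (c : R) k x : bounded_op A ->
  iter k (fun y => c *: A y) x = c ^+ k *: iter k A x.
Proof.
move=> hA; elim: k => [|k IH]; first by rewrite expr0 scale1r.
by rewrite !iterS IH bounded_opZ // scalerA exprS.
Qed.

Lemma norm_sub_limn_le (u : X ^nat) x (K : R) : cvgn u ->
  (\forall N \near \oo, `|x - u N| <= K) -> `|x - limn u| <= K.
Proof.
move=> cu hK.
have cvg_dist : `|x - u N| @[N --> \oo] --> `|x - limn u|.
  by apply: cvg_norm; apply: cvgB => //; exact: cvg_cst.
by rewrite -(cvg_lim _ cvg_dist) //; apply: limr_le => //; exact: cvgP cvg_dist.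
Qed.

End BoundedOperators.

Lemma exp_partial_sum_le (R : realType) (w : R) N : 0 <= w ->
  \sum_(k < N) w ^+ k / k`!%:R <= expR w.
Proof.
move=> w0; rewrite -(big_mkord xpredT (fun k => w ^+ k / k`!%:R)).
apply: (nondecreasing_cvgn_le _ (is_cvg_series_exp_coeff w)).
by apply: nondecreasing_series => k _ _; exact: exp_coeff_ge0.
Qed.

Lemma cvg_expop_partial_sum (R : realType) (X : completeNormedModType R)
    (A : X -> X) x : bounded_op A ->
  cvgn (fun N => \sum_(k < N) (k`!%:R^-1 : R) *: iter k A x).
Proof.
move=> hA; set u := fun k : nat => (k`!%:R^-1 : R) *: iter k A x.
have -> : (fun N => \sum_(k < N) u k) = series u.
  by apply/funext => N; rewrite /series /= big_mkord.
apply: normed_cvg; apply: (series_le_cvg (v_ := `|x| *: exp_coeff (opnorm A))).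
- by move=> k /=.
- by move=> k; rewrite /= mulr_ge0 ?exp_coeff_ge0 ?opnorm_ge0.
- move=> k; rewrite /u /= normrZ ger0_norm ?invr_ge0 //.
  have -> : (`|x| *: exp_coeff (opnorm A)) k = k`!%:R^-1 * (opnorm A ^+ k * `|x|).
    by rewrite /exp_coeff !fctE /= -[`|x| *: _]/(`|x| * _); ring.
  by rewrite ler_wpM2l ?invr_ge0 // norm_iter_le.
- exact: is_cvg_seriesZ (is_cvg_series_exp_coeff _).
Qed.

Lemma ffact_le_expn n k : (n ^_ k <= n ^ k)%N.
Proof.
elim: k => [|k IH]; first by rewrite ffactn0 expn0.
by rewrite ffactnSr expnS mulnC leq_mul // leq_subr.
Qed.

(* n^(k+1) - n^_(k+1) <= n^k (k+1) k / 2, stated without subtraction or division *)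
Lemma expn_ffact_gap n k : (2 * n ^ k.+1 <= 2 * n ^_ k.+1 + n ^ k * (k.+1 * k))%N.
Proof.
elim: k => [|k IH]; first by rewrite ffactn1 expn0 expn1 muln0 addn0.
have ffact_le := ffact_le_expn n k.+1.
rewrite ffactnSr; move: IH ffact_le; rewrite !expnS.
set N := (n ^ k)%N; set F := (n ^_ k.+1)%N => IH ffact_le.
have [kn|nk] := leqP k.+1 n; last first.
  have -> : (n - k.+1 = 0)%N by apply/eqP; rewrite subn_eq0 ltnW.
  nia.
have nE : n = ((n - k.+1) + k.+1)%N by rewrite subnK.
have : (n * (2 * (n * N)) <= n * (2 * F + N * (k.+1 * k)))%N by rewrite leq_mul2l IH orbT.
move: (n - k.+1)%N nE => m nE; nia.
Qed.

Lemma binomial_sub_exp_coeff_le (R : realFieldType) n j :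
  `|'C(n, j.+2)%:R - (j.+2)`!%:R^-1 * n%:R ^+ j.+2| <= n%:R ^+ j.+1 / (2 * j`!%:R) :> R.
Proof.
have fact_gt0R k : 0 < k`!%:R :> R by rewrite ltr0n fact_gt0.
have binE : 'C(n, j.+2)%:R = (n ^_ j.+2)%:R / (j.+2)`!%:R :> R.
  by rewrite -bin_ffact natrM mulfK ?gt_eqF.
have ffact_le : (n ^_ j.+2)%:R <= n%:R ^+ j.+2 :> R.
  by rewrite -natrX ler_nat ffact_le_expn.
have gap : 2 * n%:R ^+ j.+2 <= 2 * (n ^_ j.+2)%:R + n%:R ^+ j.+1 * ((j.+2)%:R * (j.+1)%:R) :> R.
  by rewrite -!natrX -!natrM -natrD ler_nat expn_ffact_gap.
rewrite binE [_^-1 * _]mulrC -mulrBl normrM normfV (gtr0_norm (fact_gt0R _)).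
rewrite ler0_norm ?subr_le0 // opprB ler_pdivrMr //.
move: ffact_le gap; set F := (n ^_ j.+2)%:R => ffact_le gap.
rewrite !factS !natrM.
have -> : n%:R ^+ j.+1 / (2 * j`!%:R) * ((j.+2)%:R * ((j.+1)%:R * j`!%:R))
    = n%:R ^+ j.+1 * ((j.+2)%:R * (j.+1)%:R) / 2 :> R.
  by field; rewrite gt_eqF.
lra.
Qed.

Section ProjectionPerturbation.
Variables (R : realType) (X : completeNormedModType R) (P D C : X -> X).
Hypotheses (boundedP : bounded_op P) (boundedD : bounded_op D).
Hypotheses (PP : forall x, P (P x) = P x) (PD : forall x, P (D x) = D x)
  (DP : forall x, D (P x) = D x) (CE : forall x, C x = P x + D x).

Lemma P_iterD k x : P (iter k D (P x)) = iter k D (P x).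
Proof. by case: k => [|k]; rewrite ?iterS ?PP ?PD. Qed.

Lemma iterC_P m x : (0 < m)%N -> iter m C (P x) = iter m C x.
Proof. by case: m => // m _; rewrite !iterSr CE PP DP -CE. Qed.

Lemma iterC_binomial m N x : (m < N)%N ->
  iter m C (P x) = \sum_(k < N) 'C(m, k)%:R *: iter k D (P x).
Proof.
elim: m N => [|m IH] [|N] //= mN.
  rewrite big_ord_recl bin0 scale1r big1 ?addr0 // => i _.
  by rewrite bin0n scale0r.
rewrite (IH N.+1 (ltnW mN)) CE (bounded_op_sum (A := P)) // (bounded_op_sum (A := D)) //.
rewrite (eq_bigr (fun k : 'I_N.+1 => 'C(m, k)%:R *: iter k D (P x))); last first.
  by move=> k _; rewrite (bounded_opZ (A := P)) // P_iterD.
rewrite [Y in _ + Y](eq_bigr (fun k : 'I_N.+1 => 'C(m, k)%:R *: iter k.+1 D (P x))); last first.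
  by move=> k _; rewrite (bounded_opZ (A := D)).
rewrite [RHS]big_ord_recl [in LHS]big_ord_recl [Y in _ + Y]big_ord_recr /=.
rewrite (@bin_small m N mN) scale0r addr0 !bin0 -addrA -big_split /=.
by apply: congr2 => //; apply: eq_bigr => i _; rewrite /bump add1n add0n binS natrD scalerDl.
Qed.

Section Estimate.
Variables (n : nat) (w : R).
Hypotheses (n_gt0 : (0 < n)%N) (w_ge0 : 0 <= w) (opnormD : opnorm D <= n%:R^-1 * w).

Let boundedDD : bounded_op (fun x => D (D x)) := bounded_op_comp boundedD boundedD.

Lemma norm_binomial_sub_exp_term_le x j :
  `|'C(n, j.+2)%:R - (j.+2)`!%:R^-1 * n%:R ^+ j.+2| * `|iter j.+2 D (P x)|
    <= n%:R / 2 * opnorm (fun y => D (D y)) * `|x| * (w ^+ j / j`!%:R).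
Proof.
have n0 : n%:R != 0 :> R by rewrite pnatr_eq0 -lt0n.
have j0 : j`!%:R != 0 :> R by rewrite pnatr_eq0 -lt0n fact_gt0.
have iterD_le : `|iter j.+2 D (P x)| <= opnorm (fun y => D (D y)) * ((n%:R^-1 * w) ^+ j * `|x|).
  rewrite iterSr DP -iterSr !iterS; apply: le_trans (norm_op_le _ boundedDD) _.
  rewrite ler_wpM2l ?opnorm_ge0 //; apply: le_trans (norm_iter_le _ _ boundedD) _.
  by rewrite ler_wpM2r //; apply: lerXn2r; rewrite ?nnegrE ?opnorm_ge0 ?mulr_ge0 ?invr_ge0.
apply: le_trans (ler_pM _ _ (binomial_sub_exp_coeff_le R n j) iterD_le) _ => //.
by rewrite le_eqVlt exprMn exprVn exprS; apply/orP; left; apply/eqP; field; rewrite j0 expf_neq0.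
Qed.

Lemma norm_iter_sub_expop_partial_le x N : (n < N)%N ->
  `|iter n C x - \sum_(k < N) k`!%:R^-1 *: iter k (fun y => n%:R *: D y) (P x)|
    <= n%:R / 2 * expR w * opnorm (fun y => D (D y)) * `|x|.
Proof.
move=> nN; rewrite -iterC_P // (iterC_binomial _ nN) -sumrB.
under eq_bigr => k _ do rewrite iter_scale // scalerA -scalerBl.
apply: le_trans (ler_norm_sum _ _ _) _.
under eq_bigr => k _ do rewrite normrZ.
have [N' ->] : exists N', N = N'.+2 by exists (N - 2)%N; lia.
have coef0 : 'C(n, 0)%:R - 0`!%:R^-1 * n%:R ^+ 0 = 0 :> R.
  by rewrite bin0 expr0 invr1 mulr1 subrr.
have coef1 : 'C(n, 1)%:R - 1`!%:R^-1 * n%:R ^+ 1 = 0 :> R.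
  by rewrite bin1 invr1 mul1r subrr.
rewrite !big_ord_recl !lift0 coef0 coef1 normr0 !mul0r !add0r.
under eq_bigr => i _ do rewrite !lift0.
apply: (@le_trans _ _ (\sum_(i < N') n%:R / 2 * opnorm (fun y => D (D y)) * `|x| * (w ^+ i / i`!%:R))).
  by apply: ler_sum => i _; exact: norm_binomial_sub_exp_term_le.
rewrite -mulr_sumr [leRHS](_ : _ = n%:R / 2 * opnorm (fun y => D (D y)) * `|x| * expR w);
  last by ring.
apply: ler_wpM2l; last exact: exp_partial_sum_le.
by rewrite !mulr_ge0 ?invr_ge0 ?opnorm_ge0.
Qed.

Lemma norm_iter_sub_expop_le x :
  `|iter n C x - expop (fun y => n%:R *: D y) (P x)|
    <= n%:R / 2 * expR w * opnorm (fun y => D (D y)) * `|x|.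
Proof.
apply: norm_sub_limn_le.
  exact/cvg_expop_partial_sum/bounded_opZl.
by exists n.+1 => // N; exact: norm_iter_sub_expop_partial_le.
Qed.

End Estimate.
End ProjectionPerturbation.

Theorem lemmaC1 (R : realType) (X : completeNormedModType R) (eps : R)
  (P : X -> X) (Pt Ct : R -> X -> X) (v w : R) :
  0 < eps ->
  bounded_op P -> (forall x, P (P x) = P x) -> opnorm P = 1 ->
  0 <= v -> 0 <= w ->
  (forall t, 0 <= t <= eps ->
     bounded_op (Pt t) /\ bounded_op (Ct t) /\
     (forall x, Pt t (Pt t x) = Pt t x) /\
     (forall x, Pt t (Ct t x) = Ct t x) /\
     (forall x, Ct t (Pt t x) = Ct t x) /\
     opnorm (fun x => Pt t x - P x) <= t * v /\
     opnorm (fun x => Ct t x - Pt t x) <= t * w) ->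
  forall n : nat, (0 < n)%N -> 0 <= (n%:R^-1 : R) <= eps ->
  let t := (n%:R^-1 : R) in
  let D := fun x => Ct t x - Pt t x in
  opnorm (fun x => iter n (Ct t) x - expop (fun y => n%:R *: D y) (Pt t x))
    <= n%:R / 2 * expR (v + w) * opnorm (fun x => D (D x))
  /\ n%:R / 2 * expR (v + w) * opnorm (fun x => D (D x))
    <= w ^+ 2 / (2 * n%:R) * expR (v + w).
Proof.
move=> _ _ _ _ v0 w0 hyps n n0 /hyps[hP [hC [PP [PC [CP [_ hD]]]]]] t D.
have boundedD : bounded_op D := bounded_opB hC hP.
have PD x : Pt t (D x) = D x by rewrite /D (proj1 hP) bounded_opN // PC PP.
have DP x : D (Pt t x) = D x by rewrite /D CP PP.
have CE x : Ct t x = Pt t x + D x by rewrite /D addrCA subrr addr0.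
have DD_ge0 : 0 <= opnorm (fun x => D (D x)) by apply/opnorm_ge0/bounded_op_comp.
have c_ge0 : 0 <= n%:R / 2 * expR (v + w) :> R by rewrite mulr_ge0 ?expR_ge0.
split.
  apply: opnorm_le => x x1.
  apply: le_trans (norm_iter_sub_expop_le hP boundedD PP PD DP CE n0 w0 hD x) _.
  rewrite -[leRHS]mulr1 ler_pM ?normr_ge0 ?mulr_ge0 ?expR_ge0 //.
  by rewrite ler_wpM2r // ler_wpM2l // ler_expR lerDr.
have DD_le : opnorm (fun x => D (D x)) <= (n%:R^-1 * w) ^+ 2.
  apply: le_trans (opnorm_comp_le boundedD boundedD) _.
  by rewrite -expr2 lerXn2r ?nnegrE ?opnorm_ge0 ?mulr_ge0.
apply: le_trans (ler_wpM2l c_ge0 DD_le) _.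
by rewrite le_eqVlt; apply/orP; left; apply/eqP; field; rewrite pnatr_eq0 -lt0n.
Qed.
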